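(* Let $(X_1,X_2)$ be an extensible pair and $\gamma\in\mathcal H_2$. Then the following are equivalent: (i) $|\gamma|_{(X_1,X_2)}=0$; (ii) $\gamma^{(k)}\in Q(Z_k)$ for all sufficiently large $k$; (iii) $\gamma^{(k)}\in Q(Z_k)$ for infinitely many values of $k$.
   Context: Marked Dynkin diagram $(X,\xi)$: Dynkin diagram of a symmetrizable generalized Cartan matrix $C(X)$ with distinguished node $\xi$; $\det X=\det C(X)$; $X(-1)$ is $X$ minus $\xi$ ($\det\emptyset=1$); $\Delta_X=\det X-\det X(-1)$. $(X_1,X_2)$ is an extensible pair if $\det X_i\ne0$, $\Delta_i:=\Delta_{X_i}\ne0$, $\gcd(\det X_i,\Delta_i)=1$ ($i=1,2$), $\gcd(\Delta_1,\Delta_2)=1$. $Z_k$ is obtained from the disjoint union of $X_1$, a path $A_k$ (nodes $1,\dots,k$) and $X_2$ by adding simple edges $\xi_1$—$1$ and $k$—$\xi_2$; $\omega_p,\alpha_p$ are fundamental weights and simple roots of $\mathfrak g(Z_k)$, $Q(Z_k)$ the root lattice. Numberings: if $X$ has $d$ nodes, a numbering is a bijection $\epsilon:N(X)\to\{1,\dots,d\}$ with $\epsilon(\xi)=d$. $X(m)$ ($m\ge0$) is $X$ with a path of $m$ new nodes $\xi-1-2-\cdots-m$ attached at $\xi$, numbered by $j(p)=\epsilon(p)$ on $X$ and $j=d+t$ on the $t$-th new node; $\bar\omega^{(m)}$ is the fundamental weight of $\mathfrak g(X(m))$ at the node with $j=d+m$. For $X$ extensible ($\det X\ne0$, $\Delta_X\ne0$,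 $\gcd(\det X,\Delta_X)=1$) there is (by earlier work of Kleber and the author) a unique integer sequence $(a_i)_{i\ge1}$ such that for all $m\ge0$ with $\det X(m)\ne0$ and all $p\in X(m)$, $-\Delta_X\omega_p-a_{j(p)}\bar\omega^{(m)}\in Q(X(m))$. Fix numberings $\epsilon_1,\epsilon_2$ of $X_1,X_2$ ($d_i$ = number of nodes of $X_i$) and let $(a_i^{(1)}),(a_i^{(2)})$ be the corresponding sequences. On $Z_k$ define numberings $i,\bar\imath$: $i(p)=\epsilon_1(p)$ for $p\in X_1$, $i(p)=d_1+t$ for the $t$-th node of $A_k$, $i(p)=d_1+d_2+k+1-\epsilon_2(p)$ for $p\in X_2$; $\bar\imath(p)=\epsilon_2(p)$ for $p\in X_2$, $\bar\imath(p)=d_2+k+1-t$ for the $t$-th node of $A_k$, $\bar\imath(p)=d_1+d_2+k+1-\epsilon_1(p)$ for $p\in X_1$. $\mathcal H_1$ is the set of integer sequences $x=(x_1,x_2,\dots)$ with finitely many nonzero terms, $\ell(x)=\max\{i:x_i\ne0\}$; $\mathcal H_2=\mathcal H_1\times\mathcal H_1$. For $\gamma=(x,y)$: $\mathrm{ls}(\gamma)=\max(\ell(x),d_1)$, $\mathrm{rs}(\gamma)=\max(\ell(y),d_2)$, $\ell(\gamma)=\mathrm{ls}+\mathrm{rs}$, and for $k\ge\ell(\gamma)-d_1-d_2$, $\gamma^{(k)}=\sum_{p\in Z_k}(x_{i(p)}+y_{\bar\imath(p)})\omega_p$. The number of boxes is $|\gamma|_{(X_1,X_2)}=\Delta_2\sum_ix_ia_i^{(1)}-\Delta_1\sum_iy_ia_i^{(2)}$.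 *)

From mathcomp Require Import all_boot all_order all_algebra.
Set Implicit Arguments. Unset Strict Implicit. Unset Printing Implicit Defensive.
Import Order.TTheory GRing.Theory Num.Theory.
Local Open Scope ring_scope.

(* A marked Dynkin diagram (X, xi) with d nodes, together with a numbering
   eps (eps(xi) = d), is represented by its generalized Cartan matrix
   C : nat -> nat -> int, where the node numbered j (1 <= j <= d) has
   0-based index j-1; hence xi has index d-1.  Only entries with both
   indices < d are relevant.  Convention (Kac): C i j = <alpha_i^vee, alpha_j>,
   so alpha_j = sum_i C i j * omega_i. *)

Definition cmx (n : nat) (C : nat -> nat -> int) : 'M[int]_n :=
  \matrix_(i < n, j < n) C i j.

Definition detC (n : nat) (C : nat -> nat -> int) : int := \det (cmx n C).

Definition is_GCM (n : nat) (C : nat -> nat -> int) : Prop :=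
  [/\ (forall i, (i < n)%N -> C i i = 2),
      (forall i j, (i < n)%N -> (j < n)%N -> i != j -> C i j <= 0) &
      (forall i j, (i < n)%N -> (j < n)%N -> (C i j == 0) = (C j i == 0))].

(* C = D B with D positive diagonal and B symmetric, i.e. s_j C_ij = s_i C_ji
   for some positive s (which may be taken integral after clearing denominators). *)
Definition symmetrizable (n : nat) (C : nat -> nat -> int) : Prop :=
  exists s : nat -> int, (forall i, (i < n)%N -> 0 < s i) /\
    (forall i j, (i < n)%N -> (j < n)%N -> s j * C i j = s i * C j i).

Definition marked_diagram (d : nat) (C : nat -> nat -> int) : Prop :=
  [/\ (0 < d)%N, is_GCM d C & symmetrizable d C].

(* Delta_X = det X - det X(-1); X(-1) = X minus xi = first d-1 nodes. *)
Definition Delta (d : nat) (C : nat -> nat -> int) : int :=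
  detC d C - detC d.-1 C.

Definition extensible (d : nat) (C : nat -> nat -> int) : Prop :=
  [/\ detC d C != 0, Delta d C != 0 & coprimez (detC d C) (Delta d C)].

Definition extensible_pair d1 C1 d2 C2 : Prop :=
  [/\ extensible d1 C1, extensible d2 C2 & coprimez (Delta d1 C1) (Delta d2 C2)].

(* weight sum_i c_i omega_i lies in the root lattice of the Cartan matrix C
   (size n): it is an integral combination sum_j v_j alpha_j. *)
Definition in_root_lattice (n : nat) (C : nat -> nat -> int) (c : nat -> int) : Prop :=
  exists v : nat -> int, forall i, (i < n)%N -> c i = \sum_(j < n) C i j * v j.

Definition adjacent (t u : nat) : bool := (t.+1 == u) || (u.+1 == t).

(* X(m): X with a path xi - 1 - ... - m attached; new t-th node has index d+t-1
   (numbering j = d + t). *)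
Definition ext_mx (d : nat) (C : nat -> nat -> int) (m : nat) : nat -> nat -> int :=
  fun t u => if (t < d)%N && (u < d)%N then C t u
             else if t == u then 2 else if adjacent t u then -1 else 0.

(* The defining property of the sequence (a_i)_{i>=1} attached to (X, eps):
   for all m with det X(m) <> 0 and all p in X(m),
   -Delta_X omega_p - a_{j(p)} omega_bar^(m) in Q(X(m)).
   (a 0 is irrelevant.) *)
Definition is_a_seq (d : nat) (C : nat -> nat -> int) (a : nat -> int) : Prop :=
  forall m : nat, detC (d + m) (ext_mx d C m) != 0 ->
    forall t, (t < d + m)%N ->
      in_root_lattice (d + m) (ext_mx d C m)
        (fun s => - Delta d C * (if s == t then 1 else 0)
                  - a t.+1 * (if s == (d + m).-1 then 1 else 0)).

(* Z_k, nodes indexed by the numbering i (0-based index = i(p) - 1):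
   indices < d1 : X1 (eps1), next k : the path A_k, last d2 : X2 where the
   index t corresponds to the X2 node with eps2 = d1+d2+k - t. *)
Definition zmat d1 (C1 : nat -> nat -> int) d2 (C2 : nat -> nat -> int) (k : nat)
  : nat -> nat -> int :=
  fun t u =>
    let n := (d1 + d2 + k)%N in
    if (t < d1)%N && (u < d1)%N then C1 t u
    else if (d1 + k <= t)%N && (d1 + k <= u)%N then C2 (n - 1 - t)%N (n - 1 - u)%N
    else if t == u then 2 else if adjacent t u then -1 else 0.

(* Elements of H_1: finitely supported integer sequences x = (x_1, x_2, ...),
   represented by a finite list [:: x_1; x_2; ...]. *)
Definition sq (x : seq int) (i : nat) : int :=
  if i is i'.+1 then nth 0 x i' else 0.

Definition ell (x : seq int) : nat :=
  \max_(i < size x | nth (0:int) x i != 0) i.+1.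

Definition lsg (d1 : nat) (x : seq int) : nat := maxn (ell x) d1.
Definition rsg (d2 : nat) (y : seq int) : nat := maxn (ell y) d2.

Definition gamma_defined d1 d2 (x y : seq int) (k : nat) : Prop :=
  (lsg d1 x + rsg d2 y <= d1 + d2 + k)%N.

(* coefficient of omega_p in gamma^(k), p of 0-based index t, i.e. i(p) = t+1,
   ibar(p) = d1+d2+k - t. *)
Definition gamma_k d1 d2 (x y : seq int) (k : nat) : nat -> int :=
  fun t => sq x t.+1 + sq y (d1 + d2 + k - t)%N.

Definition gamma_in_Q d1 C1 d2 C2 (x y : seq int) (k : nat) : Prop :=
  in_root_lattice (d1 + d2 + k) (zmat d1 C1 d2 C2 k) (gamma_k d1 d2 x y k).

Definition boxes d1 C1 d2 C2 (a1 a2 : nat -> int) (x y : seq int) : int :=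
  Delta d2 C2 * (\sum_(i < size x) nth 0 x i * a1 i.+1)
  - Delta d1 C1 * (\sum_(i < size y) nth 0 y i * a2 i.+1).

From mathcomp Require Import all_boot all_order all_algebra.
From mathcomp Require Import zify ring.
Import Order.TTheory GRing.Theory Num.Theory.
Local Open Scope ring_scope.
Set Implicit Arguments. Unset Strict Implicit. Unset Printing Implicit Defensive.

(* Let f_i := acoef d_i C_i be the closed form of the a-sequence of X_i: the last
   row of adj C_i, continued linearly with slope Delta_i along the attached path.
   Modulo Q(Z_k) every weight is a multiple of the hinge h = omega_(first path
   node) - omega_(xi_1), the integer N_k := Delta_2 f_1(d_1 + k) + Delta_1 f_2(d_2 - 1)
   kills h, and Delta_1 Delta_2 gamma^(k) = |gamma| h.  As N_k is coprime to
   Delta_1 Delta_2, |gamma| = 0 gives gamma^(k) in Q.  Conversely the functional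
   equal to Delta_2 f_1 on the left part of Z_k and to -Delta_1 f_2 (mirrored) on
   the right part maps Q(Z_k) into N_k Z and h to Delta_1 Delta_2, so gamma^(k) in Q
   forces N_k | |gamma|.  Since N_k is affine in k with slope Delta_1 Delta_2 <> 0,
   this can hold for infinitely many k only if |gamma| = 0. *)

Definition kron (a i : nat) : int := if i == a then 1 else 0.

Lemma kronC a i : kron a i = kron i a.
Proof. by rewrite /kron eq_sym. Qed.

Lemma kron_mirror n i j : (i < n)%N -> (j < n)%N ->
  kron j (n - 1 - i) = kron (n - 1 - j) i.
Proof. by move=> lt_i lt_j; rewrite /kron; case: eqP; case: eqP => //; lia. Qed.

Lemma sum_mul_kron n (h : nat -> int) a :
  \sum_(t < n) h t * kron a t = if (a < n)%N then h a else 0.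
Proof.
transitivity (\sum_(t < n | (t : nat) == a) h t); last exact: big_ord1_eq.
rewrite [RHS]big_mkcond; apply: eq_bigr => t _; rewrite /kron.
by case: eqP; rewrite ?mulr1 ?mulr0.
Qed.

Lemma sum_mul_kronZ n (h : nat -> int) z a :
  \sum_(t < n) h t * (z * kron a t) = if (a < n)%N then z * h a else 0.
Proof.
under eq_bigr do rewrite mulrCA.
by rewrite -mulr_sumr sum_mul_kron; case: ifP; rewrite ?mulr0.
Qed.

Lemma sum_ord_if_lt n d (G : nat -> int) : (d <= n)%N ->
  \sum_(t < n) (if (t < d)%N then G t else 0) = \sum_(t < d) G t.
Proof.
move=> le_dn; rewrite (big_ord_widen n G le_dn) [RHS]big_mkcond.
by apply: eq_bigr => t _; case: ifP.
Qed.

Lemma sum_ord_mirror n (F : nat -> int) :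
  \sum_(t < n) F t = \sum_(t < n) F (n - 1 - t)%N.
Proof.
rewrite -(big_mkord xpredT F) big_rev_mkord subn0.
by apply: eq_bigr => t _; congr F; lia.
Qed.

Section RootLattice.
Variables (n : nat) (M : nat -> nat -> int).
Local Notation Q := (in_root_lattice n M).

Lemma lat_ext c c' : Q c -> (forall i, (i < n)%N -> c i = c' i) -> Q c'.
Proof. by move=> [v Dc] cc'; exists v => i lt_in; rewrite -cc' ?Dc. Qed.

Lemma lat0 : Q (fun _ => 0).
Proof. by exists (fun _ => 0) => i _; rewrite big1 // => j _; rewrite mulr0. Qed.

Lemma latD c1 c2 : Q c1 -> Q c2 -> Q (fun i => c1 i + c2 i).
Proof.
move=> [v1 Dc1] [v2 Dc2]; exists (fun j => v1 j + v2 j) => i lt_in.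
by rewrite Dc1 // Dc2 // -big_split; apply: eq_bigr => j _; rewrite mulrDr.
Qed.

Lemma latZ z c : Q c -> Q (fun i => z * c i).
Proof.
move=> [v Dc]; exists (fun j => z * v j) => i lt_in.
by rewrite Dc // mulr_sumr; apply: eq_bigr => j _; rewrite mulrCA.
Qed.

Lemma latB c1 c2 : Q c1 -> Q c2 -> Q (fun i => c1 i - c2 i).
Proof.
move=> Qc1 /(latZ (-1)) QNc2; apply: lat_ext (latD Qc1 QNc2) _ => i _.
by rewrite mulN1r.
Qed.

Lemma lat_col u : (u < n)%N -> Q (fun i => M i u).
Proof. by move=> lt_un; exists (kron u) => i _; rewrite sum_mul_kron lt_un. Qed.

Lemma lat_sum m (F : nat -> nat -> int) : (forall t, (t < m)%N -> Q (F t)) ->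
  Q (fun i => \sum_(t < m) F t i).
Proof.
elim: m => [|m IHm] QF.
  by apply: lat_ext lat0 _ => i _; rewrite big_ord0.
have QFm := QF m (ltnSn m).
apply: lat_ext (latD (IHm (fun t lt_tm => QF t (ltnW lt_tm))) QFm) _ => i _.
by rewrite big_ord_recr.
Qed.

Lemma lat_coprime p q c : coprimez p q ->
  Q (fun i => p * c i) -> Q (fun i => q * c i) -> Q c.
Proof.
move=> /coprimezP[[u v] /= uv1] Qpc Qqc.
apply: lat_ext (latD (latZ u Qpc) (latZ v Qqc)) _ => i _.
by rewrite !mulrA -mulrDl uv1 mul1r.
Qed.

Lemma lat_mod_coprime p q (g c : nat -> int) (z1 z2 : int) : coprimez p q ->
  Q (fun i => p * c i - z1 * g i) -> Q (fun i => q * c i - z2 * g i) ->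
  exists z, Q (fun i => c i - z * g i).
Proof.
move=> /coprimezP[[u v] /= uv1] Q1 Q2; exists (u * z1 + v * z2).
apply: lat_ext (latD (latZ u Q1) (latZ v Q2)) _ => i _.
transitivity ((u * p + v * q) * c i - (u * z1 + v * z2) * g i); first ring.
by rewrite uv1 mul1r.
Qed.

End RootLattice.

Lemma lat_eq_mx n M M' c :
  (forall t u, (t < n)%N -> (u < n)%N -> M t u = M' t u) ->
  in_root_lattice n M c -> in_root_lattice n M' c.
Proof.
move=> eqM [v Dc]; exists v => i lt_in.
by rewrite Dc //; apply: eq_bigr => j _; rewrite eqM.
Qed.

Lemma lat_mirror n M c : in_root_lattice n M c ->
  in_root_lattice n (fun t u => M (n - 1 - t)%N (n - 1 - u)%N)
    (fun i => c (n - 1 - i)%N).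
Proof.
move=> [v Dc]; exists (fun j => v (n - 1 - j)%N) => i lt_in.
rewrite Dc; last lia.
by rewrite (sum_ord_mirror n (fun j => M _ j * v j)).
Qed.

Lemma detC_neq0_of_row_kernel n (M : nat -> nat -> int) :
  (forall p : nat -> int, (forall u, (u < n)%N -> \sum_(t < n) p t * M t u = 0) ->
     forall t, (t < n)%N -> p t = 0) ->
  detC n M != 0.
Proof.
case: n => [|e] ker; first by rewrite /detC det_mx00.
apply/negP => /det0P[v /negP v_neq0 vM0]; apply: v_neq0; apply/eqP/rowP => j.
suff /(_ j (ltn_ord j)) : forall t, (t < e.+1)%N -> v 0 (inord t) = 0.
  by rewrite inord_val mxE.
apply: ker => u lt_u.
have := congr1 (fun w : 'rV_e.+1 => w 0 (inord u)) vM0; rewrite !mxE.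
by apply: etrans; apply: eq_bigr => i _; rewrite inord_val !mxE inordK.
Qed.

(* The size d.-1.+1 (equal to d when d > 0) makes inord and ord_max available. *)
Definition adjC d (C : nat -> nat -> int) (u t : nat) : int :=
  \adj (cmx d.-1.+1 C) (inord u) (inord t).

Section Adjugate.
Variables (d : nat) (C : nat -> nat -> int).
Hypothesis d_gt0 : (0 < d)%N.

Let inord_eq e (i j : nat) : (i <= e)%N -> (j <= e)%N ->
  (inord i == inord j :> 'I_e.+1) = (i == j).
Proof. by move=> le_ie le_je; apply/eqP/eqP => [/(congr1 val)|->] //=; rewrite !inordK. Qed.

Lemma adjC_mul s u : (s < d)%N -> (u < d)%N ->
  \sum_(t < d) adjC d C s t * C t u = detC d C * kron s u.
Proof.
case: d d_gt0 => // e _ lt_se lt_ue.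
have := congr1 (fun A : 'M[int]_e.+1 => A (inord s) (inord u)) (mul_adj_mx (cmx e.+1 C)).
rewrite /= !mxE inord_eq // => E.
transitivity (\det (cmx e.+1 C) *+ (s == u)).
  by rewrite -E; apply: eq_bigr => j _; rewrite /adjC inord_val !mxE inordK.
by rewrite /kron eq_sym /detC; case: eqP; rewrite ?mulr1 ?mulr0.
Qed.

Lemma mul_adjC s t : (s < d)%N -> (t < d)%N ->
  \sum_(u < d) C s u * adjC d C u t = detC d C * kron t s.
Proof.
case: d d_gt0 => // e _ lt_se lt_te.
have := congr1 (fun A : 'M[int]_e.+1 => A (inord s) (inord t)) (mul_mx_adj (cmx e.+1 C)).
rewrite /= !mxE inord_eq // => E.
transitivity (\det (cmx e.+1 C) *+ (s == t)).
  by rewrite -E; apply: eq_bigr => j _; rewrite /adjC inord_val !mxE inordK.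
by rewrite /kron eq_sym /detC; case: eqP; rewrite ?mulr1 ?mulr0.
Qed.

Lemma adjC_last : adjC d C d.-1 d.-1 = detC d.-1 C.
Proof.
case: d d_gt0 => // e _ /=; rewrite /adjC mxE.
have -> : inord e = ord_max :> 'I_e.+1 by apply: val_inj; rewrite /= inordK.
rewrite /cofactor /= addnn -signr_odd odd_double expr0 mul1r /detC.
by congr (\det _); apply/matrixP => i j; rewrite !mxE; congr C; rewrite lift_max.
Qed.

Lemma adjC_mul_vec s (w : nat -> int) : (s < d)%N ->
  \sum_(t < d) adjC d C s t * (\sum_(j < d) C t j * w j) = detC d C * w s.
Proof.
move=> lt_sd; under eq_bigr do rewrite mulr_sumr; rewrite exchange_big /=.
rewrite (eq_bigr (fun j : 'I_d => w j * (detC d C * kron s j))) => [|j _].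
  by rewrite sum_mul_kronZ lt_sd mulrC.
by under eq_bigr do rewrite mulrA; rewrite -mulr_suml adjC_mul // mulrC.
Qed.

Lemma row_kernel_adjC (p : nat -> int) z :
  (forall u, (u < d)%N -> \sum_(t < d) p t * C t u = z * kron d.-1 u) ->
  forall s, (s < d)%N -> detC d C * p s = z * adjC d C d.-1 s.
Proof.
move=> pC s lt_sd.
have -> : detC d C * p s = \sum_(t < d) p t * \sum_(u < d) C t u * adjC d C u s.
  rewrite (eq_bigr (fun t : 'I_d => p t * (detC d C * kron s t))) => [|t _].
    by rewrite sum_mul_kronZ lt_sd.
  by rewrite mul_adjC.
rewrite (eq_bigr (fun t : 'I_d => \sum_(u < d) p t * C t u * adjC d C u s)) => [|t _].
  rewrite exchange_big /= (eq_bigr (fun u : 'I_d => z * adjC d C u s * kron d.-1 u)).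
    by rewrite (sum_mul_kron d (fun u => z * adjC d C u s)) ifT //; lia.
  by move=> u _; rewrite -mulr_suml pC // mulrAC.
by rewrite mulr_sumr; apply: eq_bigr => u _; rewrite mulrA.
Qed.

End Adjugate.

Lemma abs_affine_gt (D X : int) (m B : nat) : X != 0 ->
  (absz D + B < m)%N -> (B < absz (D + m%:Z * X)%R)%N.
Proof.
move=> X_neq0 lt_m; have [X_ge1|X_le1] : 1 <= X \/ X <= -1 by lia.
  have : m%:Z <= m%:Z * X by rewrite ler_peMr //; lia.
  by lia.
have : m%:Z * X <= - m%:Z by rewrite -mulrN1 ler_wpM2l //; lia.
by lia.
Qed.

Lemma dvdz_lt_abs_eq0 (N z : int) : (N %| z)%Z -> (absz z < absz N)%N -> z = 0.
Proof.
rewrite dvdzE => dvd_Nz lt_zN; apply/eqP; rewrite -absz_eq0.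
by case: (posnP (absz z)) => // /dvdn_leq/(_ dvd_Nz); lia.
Qed.

Lemma eq0_of_dvdz_affine (D X z : int) : X != 0 ->
  (forall N : nat, exists2 m : nat, (N <= m)%N & (D + m%:Z * X %| z)%Z) -> z = 0.
Proof.
move=> X_neq0 /(_ (absz D + absz z + 1)%N) [m le_m dvd_z].
by apply: dvdz_lt_abs_eq0 dvd_z _; apply: abs_affine_gt; lia.
Qed.

Lemma harmonic_path_linear n d (p : nat -> int) : (d <= n)%N ->
  (forall u, (d <= u < n)%N ->
     2 * p u - p u.-1 - (if (u.+1 < n)%N then p u.+1 else 0) = 0) ->
  forall i, (i <= n - d)%N -> p (n.-1 - i)%N = (i%:Z + 1) * p n.-1.
Proof.
move=> le_dn harm.
suff lin2 i : (i < n - d)%N -> p (n.-1 - i)%N = (i%:Z + 1) * p n.-1 /\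
    p (n.-1 - i.+1)%N = (i%:Z + 2) * p n.-1.
  case=> [|i] lt_i; first by rewrite subn0 mul1r.
  by have [_ ->] := lin2 i lt_i; congr (_ * _); lia.
elim: i => [|i IHi] lt_i.
  have := harm n.-1; rewrite ifF; last lia.
  have -> : n.-1.-1 = (n.-1 - 1)%N by lia.
  move=> /(_ ltac:(lia)) E; rewrite subn0 mul1r; split=> //.
  by apply: subr0_eq; rewrite -oppr0 -E; ring.
have [IH0 IH1] := IHi (ltnW lt_i); split; first by rewrite IH1; congr (_ * _); lia.
have := harm (n.-1 - i.+1)%N; rewrite ifT; last lia.
have -> : (n.-1 - i.+1).-1 = (n.-1 - i.+2)%N by lia.
have -> : (n.-1 - i.+1).+1 = (n.-1 - i)%N by lia.
move=> /(_ ltac:(lia)); rewrite IH0 IH1 => E.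
have -> : i.+1%:Z + 2 = 2 * (i%:Z + 2) - (i%:Z + 1) by lia.
by apply: subr0_eq; rewrite -oppr0 -E; ring.
Qed.

Ltac case_ifs := repeat (case: ifP => ?); rewrite ?subr0 ?sub0r ?opprK //=; try lia.

Section ExtendedDiagram.
Variables (d : nat) (C : nat -> nat -> int) (m : nat).
Hypothesis d_gt0 : (0 < d)%N.
Local Notation X := (ext_mx d C m).

Lemma ext_mx_X t u : (u < d)%N ->
  X t u = (if (t < d)%N then C t u else 0) - (if u == d.-1 then kron d t else 0).
Proof. by move=> lt_ud; rewrite /ext_mx /kron /adjacent; case_ifs. Qed.

Lemma ext_mx_path t u : (d <= u)%N -> X t u = 2 * kron u t - kron u.-1 t - kron u.+1 t.
Proof. by move=> le_du; rewrite /ext_mx /kron /adjacent; case_ifs. Qed.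

Lemma sum_mul_ext_mx_X n (h : nat -> int) u : (d <= n)%N -> (u < d)%N ->
  \sum_(t < n) h t * X t u =
  \sum_(t < d) h t * C t u - (if (u == d.-1) && (d < n)%N then h d else 0).
Proof.
move=> le_dn lt_ud.
rewrite (eq_bigr (fun t : 'I_n => (if (t < d)%N then h t * C t u else 0)
   - (if u == d.-1 then h t * kron d t else 0))) => [|t _]; last first.
  by rewrite ext_mx_X // mulrBr; congr (_ - _); case: ifP; rewrite ?mulr0.
rewrite sumrB (sum_ord_if_lt (fun t => h t * C t u) le_dn); congr (_ - _).
by case: (u == d.-1); [rewrite sum_mul_kron | rewrite big1].
Qed.

Lemma sum_mul_ext_mx_path n (h : nat -> int) u : (d <= u < n)%N ->
  \sum_(t < n) h t * X t u =
  2 * h u - h u.-1 - (if (u.+1 < n)%N then h u.+1 else 0).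
Proof.
move=> /andP[le_du lt_un].
rewrite (eq_bigr (fun t : 'I_n => h t * (2 * kron u t) - h t * (1 * kron u.-1 t)
   - h t * (1 * kron u.+1 t))) => [|t _]; last by rewrite ext_mx_path //; ring.
rewrite !sumrB !sum_mul_kronZ lt_un ifT; last lia.
by case: ifP; rewrite ?mul1r.
Qed.

Lemma ext_mx_mul_X n (w : nat -> int) i : (d <= n)%N ->
  \sum_(j < n) X i j * (if (j < d)%N then w j else 0) =
  (if (i < d)%N then \sum_(j < d) C i j * w j else 0) - kron d i * w d.-1.
Proof.
move=> le_dn.
rewrite (eq_bigr (fun j : 'I_n => if (j < d)%N then X i j * w j else 0)) => [|j _];
  last by case: ifP; rewrite ?mulr0.
rewrite (sum_ord_if_lt (fun j => X i j * w j) le_dn).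
rewrite (eq_bigr (fun j : 'I_d => (if (i < d)%N then C i j * w j else 0)
   - w j * (kron d i * kron d.-1 j))) => [|j _]; last first.
  by rewrite ext_mx_X // /kron; case_ifs; ring.
rewrite sumrB sum_mul_kronZ ifT; last lia.
by congr (_ - _); case: ifP => _ //; rewrite big1.
Qed.

(* A left kernel vector is linear along the path and, on X, proportional to the
   last row of adj C; matching the two at xi gives (det C + m Delta) p_last = 0. *)
Lemma ext_mx_row_kernel (p : nat -> int) :
  detC d C != 0 -> detC d C + m%:Z * Delta d C != 0 ->
  (forall u, (u < d + m)%N -> \sum_(t < d + m) p t * X t u = 0) ->
  forall t, (t < d + m)%N -> p t = 0.
Proof.
move=> det_neq0 N_neq0 pX.
have lin := harmonic_path_linear (leq_addr m d) (p := p).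
have /lin {}lin : forall u, (d <= u < d + m)%N ->
    2 * p u - p u.-1 - (if (u.+1 < d + m)%N then p u.+1 else 0) = 0.
  by move=> u /andP[? ?]; rewrite -sum_mul_ext_mx_path ?pX //; apply/andP.
have pX_block u : (u < d)%N -> \sum_(t < d) p t * C t u =
    (if (0 < m)%N then p d else 0) * kron d.-1 u.
  move=> lt_ud; have := pX u (ltn_addr m lt_ud).
  rewrite (sum_mul_ext_mx_X _ (leq_addr m d) lt_ud) => /subr0_eq ->.
  have -> : (d < d + m)%N = (0 < m)%N by lia.
  by rewrite /kron; case: (u == d.-1); case: (0 < m)%N; rewrite ?mulr1 ?mulr0.
have p_block := row_kernel_adjC d_gt0 pX_block.
have p_block0 s : (s < d)%N -> (if (0 < m)%N then p d else 0) = 0 -> p s = 0.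
  move=> lt_sd z0; have /eqP := p_block s lt_sd; rewrite z0 mul0r mulf_eq0.
  by rewrite (negPf det_neq0) => /eqP.
have [m0|m_gt0] := posnP m.
  by move=> t; rewrite m0 addn0 => lt_td; apply: p_block0; rewrite ?m0.
set P := p (d + m).-1.
have pd : p d = m%:Z * P.
  have := lin m.-1 ltac:(lia); have -> : ((d + m).-1 - m.-1)%N = d by lia.
  by move=> ->; congr (_ * _); lia.
have pd1 : p d.-1 = (m%:Z + 1) * P.
  by have := lin m ltac:(lia); have -> : ((d + m).-1 - m)%N = d.-1 by lia.
have P0 : P = 0.
  have := p_block d.-1 ltac:(lia); rewrite m_gt0 adjC_last // pd pd1 => E.
  apply/eqP; apply: contraNT N_neq0 => P_neq0.
  have : (detC d C + m%:Z * Delta d C) * P =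
      detC d C * ((m%:Z + 1) * P) - m%:Z * P * detC d.-1 C by rewrite /Delta; ring.
  by rewrite E subrr => /eqP; rewrite mulf_eq0 (negPf P_neq0) orbF.
move=> t lt_t; have [le_td|lt_dt] := leqP d t.
  have := lin ((d + m).-1 - t)%N ltac:(lia).
  have -> : ((d + m).-1 - ((d + m).-1 - t))%N = t by lia.
  by rewrite -/P P0 mulr0.
by apply: p_block0; rewrite // m_gt0 pd P0 mulr0.
Qed.

Lemma detC_ext_mx_neq0 : detC d C != 0 -> detC d C + m%:Z * Delta d C != 0 ->
  detC (d + m) X != 0.
Proof.
by move=> det_neq0 N_neq0; apply: detC_neq0_of_row_kernel => p; apply: ext_mx_row_kernel.
Qed.

End ExtendedDiagram.

Definition acoef d (C : nat -> nat -> int) (t : nat) : int :=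
  if (t < d.-1)%N then adjC d C d.-1 t else detC d.-1 C + (t - d.-1)%:Z * Delta d C.

Section ACoefficients.
Variables (d : nat) (C : nat -> nat -> int).
Hypothesis d_gt0 : (0 < d)%N.
Local Notation f := (acoef d C).

Lemma acoef_ge t : (d.-1 <= t)%N -> f t = detC d.-1 C + (t - d.-1)%:Z * Delta d C.
Proof. by move=> le_t; rewrite /acoef ltnNge le_t. Qed.

Lemma acoef_lt t : (t < d)%N -> f t = adjC d C d.-1 t.
Proof.
move=> lt_td; rewrite /acoef; case: ifP => // ge_t.
have -> : t = d.-1 by lia.
by rewrite subnn mul0r addr0 adjC_last.
Qed.

Lemma acoef_d : f d = detC d C.
Proof.
rewrite acoef_ge; last lia.
have -> : (d - d.-1)%N = 1%N by lia.
by rewrite /Delta mul1r addrC subrK.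
Qed.

Lemma acoef_harmonic t : (d <= t)%N -> f t.-1 + f t.+1 = 2 * f t.
Proof.
move=> le_dt; rewrite !acoef_ge; try lia.
have -> : (t.-1 - d.-1)%:Z = (t - d.-1)%:Z - 1 by lia.
have -> : (t.+1 - d.-1)%:Z = (t - d.-1)%:Z + 1 by lia.
ring.
Qed.

Lemma acoef_mul_ext_mx m u : (0 < m)%N -> (u < d + m)%N ->
  \sum_(t < d + m) f t * ext_mx d C m t u =
  if u == (d + m).-1 then detC d C + m%:Z * Delta d C else 0.
Proof.
move=> m_gt0 lt_u; have [lt_ud|le_du] := ltnP u d.
  rewrite sum_mul_ext_mx_X ?leq_addr //.
  rewrite (eq_bigr (fun t : 'I_d => adjC d C d.-1 t * C t u)) => [|t _]; last by rewrite acoef_lt.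
  rewrite adjC_mul ?acoef_d; try lia.
  have -> : (d < d + m)%N by lia.
  have -> : (u == (d + m).-1) = false by apply/eqP; lia.
  by rewrite andbT /kron; case: eqP; rewrite ?mulr1 ?mulr0 ?subrr ?subr0.
rewrite sum_mul_ext_mx_path //; last lia.
case: ifP => lt_u1.
  have -> : (u == (d + m).-1) = false by apply/eqP; lia.
  by rewrite -(acoef_harmonic le_du); ring.
have -> : u = (d + m).-1 by lia.
rewrite eqxx subr0 !acoef_ge; try lia.
have -> : ((d + m).-1.-1 - d.-1)%:Z = m%:Z - 1 by lia.
have -> : ((d + m).-1 - d.-1)%:Z = m%:Z by lia.
by rewrite /Delta; ring.
Qed.

Lemma dvdz_acoef_lat m (c : nat -> int) : (0 < m)%N ->
  in_root_lattice (d + m) (ext_mx d C m) c ->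
  (detC d C + m%:Z * Delta d C %| \sum_(s < d + m) f s * c s)%Z.
Proof.
move=> m_gt0 [w Dc].
rewrite (eq_bigr (fun s : 'I_(d + m) => \sum_(j < d + m) f s * ext_mx d C m s j * w j))
  => [|s _]; last by rewrite Dc // mulr_sumr; apply: eq_bigr => j _; rewrite mulrA.
rewrite exchange_big /= rpred_sum // => j _; rewrite -mulr_suml acoef_mul_ext_mx //.
by case: eqP; rewrite ?mul0r ?dvdz0 // dvdz_mulr.
Qed.

(* acoef maps Q(X(m)) into (det C + m Delta) Z; on the defining element of the
   a-sequence this gives det C + m Delta | Delta (a - acoef) for all large m. *)
Lemma is_a_seq_acoef a : extensible d C -> is_a_seq d C a -> forall t, a t.+1 = f t.
Proof.
move=> [det_neq0 Delta_neq0 co_det_Delta] aP t; apply/subr0_eq.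
apply: (eq0_of_dvdz_affine (D := detC d C) Delta_neq0) => N.
set m := (N + t + absz (detC d C) + 1)%N; exists m; first lia.
set Nm := detC d C + m%:Z * Delta d C.
have m_gt0 : (0 < m)%N by lia.
have lt_tm : (t < d + m)%N by lia.
have Nm_neq0 : Nm != 0 by rewrite -absz_gt0; apply: abs_affine_gt; lia.
have := dvdz_acoef_lat m_gt0 (aP m (detC_ext_mx_neq0 d_gt0 det_neq0 Nm_neq0) t lt_tm).
rewrite (eq_bigr (fun s : 'I_(d + m) => f s * (- Delta d C * kron t s)
    - f s * (a t.+1 * kron (d + m).-1 s))) => [|s _]; last by rewrite mulrBr.
rewrite sumrB !sum_mul_kronZ lt_tm ifT; last lia.
rewrite (acoef_ge (t := (d + m).-1)); last lia.
have -> : ((d + m).-1 - d.-1)%:Z = m%:Z by lia.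
have -> : - Delta d C * f t - a t.+1 * (detC d.-1 C + m%:Z * Delta d C) =
    Delta d C * (a t.+1 - f t) - a t.+1 * Nm by rewrite /Nm /Delta; ring.
have co_Nm : coprimez Nm (Delta d C) by rewrite /Nm /coprimez gcdzC addrC gcdzMDl gcdzC.
rewrite rpredBr; last exact: dvdz_mull (dvdzz Nm).
by rewrite Gauss_dvdzr.
Qed.

End ACoefficients.

Lemma ext_mx_col_support d C m t u : (maxn d u.+1 < t)%N -> ext_mx d C m t u = 0.
Proof. by move=> lt_t; rewrite /ext_mx /adjacent; case_ifs. Qed.

Lemma zmat_ext_mx d1 C1 d2 C2 k m t u : (u < d1 + k)%N ->
  zmat d1 C1 d2 C2 k t u = ext_mx d1 C1 m t u.
Proof. by move=> lt_u; rewrite /zmat /ext_mx; case_ifs. Qed.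

Lemma zmat_swap d1 C1 d2 C2 k t u :
  (t < d1 + d2 + k)%N -> (u < d1 + d2 + k)%N ->
  zmat d2 C2 d1 C1 k (d1 + d2 + k - 1 - t) (d1 + d2 + k - 1 - u) = zmat d1 C1 d2 C2 k t u.
Proof.
move=> lt_t lt_u; rewrite /zmat /adjacent.
have -> : (d2 + d1 + k)%N = (d1 + d2 + k)%N by lia.
have -> : (d1 + d2 + k - 1 - (d1 + d2 + k - 1 - t))%N = t by lia.
have -> : (d1 + d2 + k - 1 - (d1 + d2 + k - 1 - u))%N = u by lia.
by case_ifs.
Qed.

Lemma lat_zmat_swap d1 C1 d2 C2 k c :
  in_root_lattice (d2 + d1 + k) (zmat d2 C2 d1 C1 k) c ->
  in_root_lattice (d1 + d2 + k) (zmat d1 C1 d2 C2 k) (fun i => c (d1 + d2 + k - 1 - i)%N).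
Proof.
move=> /lat_mirror; rewrite (addnC d2 d1).
by apply: lat_eq_mx => t u lt_t lt_u; apply: zmat_swap.
Qed.

Lemma ell_gt (z : seq int) t : nth 0 z t != 0 -> (t < ell z)%N.
Proof.
move=> zt_neq0; have lt_t : (t < size z)%N by case: ltnP zt_neq0 => // ?; rewrite nth_default.
exact: (leq_bigmax_cond (Ordinal lt_t)).
Qed.

Lemma sum_nth_ell (z : seq int) (F : nat -> int) m : (ell z <= m)%N ->
  \sum_(t < m) nth 0 z t * F t = \sum_(i < size z) nth 0 z i * F i.
Proof.
move=> le_m.
have widen p q : (p <= q)%N -> (forall t, (p <= t < q)%N -> nth 0 z t = 0) ->
    \sum_(t < p) nth 0 z t * F t = \sum_(t < q) nth 0 z t * F t.
  move=> le_pq z0; rewrite -(sum_ord_if_lt (fun t => nth 0 z t * F t) le_pq).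
  by apply: eq_bigr => t _; case: ifP => // ?; rewrite z0 ?mul0r //; rewrite ltn_ord andbT; lia.
rewrite (widen m (m + size z)%N) ?leq_addr //; last first.
  by move=> t /andP[? ?]; apply/eqP; apply: contraT => /ell_gt; lia.
symmetry; rewrite (widen (size z) (m + size z)%N) ?leq_addl // => t /andP[? ?].
by rewrite nth_default.
Qed.

(* Indices are 0-based: in Z_k node d1 is the first node of the path and d1.-1 is xi_1. *)
Definition hinge d i : int := kron d i - kron d.-1 i.

Section OneSide.
Variables (d1 d2 k : nat) (C1 C2 : nat -> nat -> int) (a1 : nat -> int).
Hypotheses (d1_gt0 : (0 < d1)%N) (d2_gt0 : (0 < d2)%N) (k_gt0 : (0 < k)%N).
Hypotheses (ext1 : extensible d1 C1) (a1P : is_a_seq d1 C1 a1).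

Local Notation n := (d1 + d2 + k)%N.
Local Notation Q := (in_root_lattice n (zmat d1 C1 d2 C2 k)).
Local Notation X := (Delta d1 C1).
Local Notation f := (acoef d1 C1).
Local Notation h := (hinge d1).

Lemma lat_zmat_X1_image (w : nat -> int) :
  Q (fun i => (if (i < d1)%N then \sum_(j < d1) C1 i j * w j else 0) - kron d1 i * w d1.-1).
Proof.
exists (fun j => if (j < d1)%N then w j else 0) => i _.
rewrite -(ext_mx_mul_X C1 0 d1_gt0 w i (_ : (d1 <= n)%N)); last lia.
apply: eq_bigr => j _; case: ifP => lt_j; rewrite ?mulr0 // (zmat_ext_mx _ _ _ 0) //; lia.
Qed.

Lemma lat_X1_det_node t : (t < d1)%N ->
  Q (fun i => detC d1 C1 * kron t i - f t * kron d1 i).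
Proof.
move=> lt_t; apply: lat_ext (lat_zmat_X1_image (fun u => adjC d1 C1 u t)) _ => i lt_i.
rewrite acoef_lt //.
by case: ifP => lt_id; rewrite ?mul_adjC // /kron; case_ifs; ring.
Qed.

(* Integrality comes from the a-sequence property at m = 0, where X1(0) = X1. *)
Lemma lat_X1_node t : (t < d1)%N -> Q (fun i => X * kron t i - f t * h i).
Proof.
move=> lt_t; case: ext1 => det_neq0 _ _.
have N0 : detC d1 C1 + 0%:Z * X != 0 by rewrite mul0r addr0.
have [w Dw] := @a1P 0%N (detC_ext_mx_neq0 d1_gt0 det_neq0 N0) t (ltn_addr 0 lt_t).
rewrite addn0 in Dw.
have Cw i : (i < d1)%N -> \sum_(j < d1) C1 i j * w j = - X * kron t i - f t * kron d1.-1 i.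
  move=> lt_i; rewrite -(is_a_seq_acoef d1_gt0 ext1 a1P) Dw //.
  by apply: eq_bigr => j _; rewrite /ext_mx lt_i ltn_ord.
have w_last : w d1.-1 = - f t.
  apply: (mulfI det_neq0); rewrite -adjC_mul_vec //; last lia.
  rewrite (eq_bigr (fun s : 'I_d1 => adjC d1 C1 d1.-1 s * (- X * kron t s)
    - adjC d1 C1 d1.-1 s * (f t * kron d1.-1 s))) => [|s _]; last by rewrite Cw // mulrBr.
  rewrite sumrB !sum_mul_kronZ lt_t ifT; last lia.
  by rewrite adjC_last // -acoef_lt // /Delta; ring.
apply: lat_ext (latZ (-1) (lat_zmat_X1_image w)) _ => i lt_i.
by rewrite w_last; case: ifP => lt_id; rewrite ?Cw // /hinge /kron; case_ifs; ring.
Qed.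

Lemma lat_path_step u : (d1.-1 <= u < d1 + k)%N -> Q (fun i => kron u.+1 i - kron u i - h i).
Proof.
suff step j : (d1.-1 + j < d1 + k)%N ->
    Q (fun i => kron (d1.-1 + j).+1 i - kron (d1.-1 + j) i - h i).
  by move=> /andP[le_u lt_u]; have := step (u - d1.-1)%N; rewrite subnKC //; apply.
elim: j => [|j IHj] lt_j.
  by rewrite addn0 prednK //; apply: lat_ext (lat0 _ _) _ => i _; rewrite /hinge subrr.
set v := (d1.-1 + j.+1)%N.
have col : Q (fun i => zmat d1 C1 d2 C2 k i v) by apply: lat_col; lia.
apply: lat_ext (latB (IHj ltac:(lia)) col) _ => i lt_i.
rewrite (zmat_ext_mx _ _ _ 0) ?ext_mx_path //; try lia.
have -> : v.-1 = (d1.-1 + j)%N by lia.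
have -> : (d1.-1 + j).+1 = v by lia.
clearbody v; ring.
Qed.

Lemma lat_left_node t : (t <= d1 + k)%N -> Q (fun i => X * kron t i - f t * h i).
Proof.
move=> le_t; have [lt_t|le_dt] := ltnP t d1; first exact: lat_X1_node.
suff step j : (d1.-1 + j <= d1 + k)%N ->
    Q (fun i => X * kron (d1.-1 + j) i - f (d1.-1 + j) * h i).
  by have := step (t - d1.-1)%N; rewrite subnKC; [apply | lia].
elim: j => [|j IHj] le_j; first by rewrite addn0; apply: lat_X1_node; lia.
have path := lat_path_step (u := d1.-1 + j) ltac:(lia).
apply: lat_ext (latD (IHj ltac:(lia)) (latZ X path)) _ => i _.
rewrite addnS !acoef_ge; try lia.
have -> : ((d1.-1 + j).+1 - d1.-1)%:Z = ((d1.-1 + j) - d1.-1)%:Z + 1 by lia.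
ring.
Qed.

Lemma dvdz_zmat_col (N c : int) (g : nat -> int) u :
  (forall t, (t <= d1 + k)%N -> (N %| g t - c * f t)%Z) -> (u < d1 + k)%N ->
  (N %| \sum_(t < n) g t * zmat d1 C1 d2 C2 k t u)%Z.
Proof.
move=> g_f lt_u; pose X1k := ext_mx d1 C1 (d2 + k).
rewrite (eq_bigr (fun t : 'I_n => (g t - c * f t) * X1k t u + c * (f t * X1k t u)))
  => [|t _]; last by rewrite (zmat_ext_mx _ _ _ (d2 + k)) //; ring.
rewrite big_split /= -mulr_sumr.
have -> : \sum_(t < n) f t * X1k t u = 0.
  rewrite -addnA acoef_mul_ext_mx //; try lia.
  by rewrite ifF //; apply/eqP; lia.
rewrite mulr0 addr0 rpred_sum // => t _.
have [le_t|lt_t] := leqP t (d1 + k); first by rewrite dvdz_mulr ?g_f.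
by rewrite /X1k ext_mx_col_support ?mulr0 ?dvdz0 //; lia.
Qed.

Lemma lat_left_seq (z : seq int) : (ell z <= d1 + k)%N ->
  Q (fun i => X * sq z i.+1 - (\sum_(t < n) sq z t.+1 * f t) * h i).
Proof.
move=> le_z.
have /lat_sum : forall t, (t < n)%N -> Q (fun i => sq z t.+1 * (X * kron t i - f t * h i)).
  move=> t lt_t; have [le_t|lt_t'] := leqP t (d1 + k); first exact/latZ/lat_left_node.
  have -> : sq z t.+1 = 0 by apply/eqP; apply: contraT => /ell_gt; lia.
  by apply: lat_ext (lat0 _ _) _ => i _; rewrite mul0r.
move=> Qsum; apply: lat_ext Qsum _ => i lt_i.
rewrite (eq_bigr (fun t : 'I_n => sq z t.+1 * (X * kron i t) - (sq z t.+1 * f t) * h i))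
  => [|t _]; last by rewrite kronC; ring.
by rewrite sumrB -mulr_suml sum_mul_kronZ lt_i mulrC.
Qed.

End OneSide.

Section TwoSides.
Variables (d1 d2 k : nat) (C1 C2 : nat -> nat -> int) (a1 a2 : nat -> int).
Hypotheses (d1_gt0 : (0 < d1)%N) (d2_gt0 : (0 < d2)%N) (k_gt0 : (0 < k)%N).
Hypotheses (ext1 : extensible d1 C1) (ext2 : extensible d2 C2)
  (coD : coprimez (Delta d1 C1) (Delta d2 C2))
  (a1P : is_a_seq d1 C1 a1) (a2P : is_a_seq d2 C2 a2).

Local Notation n := (d1 + d2 + k)%N.
Local Notation Q := (in_root_lattice n (zmat d1 C1 d2 C2 k)).
Local Notation X1 := (Delta d1 C1).
Local Notation X2 := (Delta d2 C2).
Local Notation f1 := (acoef d1 C1).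
Local Notation f2 := (acoef d2 C2).
Local Notation h := (hinge d1).

Lemma lat_path_end : Q (fun i => kron (d1 + k) i - kron (d1 + k).-1 i - h i).
Proof.
have := lat_path_step C1 C2 d1_gt0 d2_gt0 k_gt0 (u := (d1 + k).-1) ltac:(lia).
by rewrite prednK //; lia.
Qed.

Lemma lat_right_node t : (t <= d2 + k)%N ->
  Q (fun i => X2 * kron (n - 1 - t) i + f2 t * h i).
Proof.
move=> le_t; have := lat_zmat_swap (lat_left_node C1 d2_gt0 d1_gt0 k_gt0 ext2 a2P le_t).
move=> Qt; apply: lat_ext (latB Qt (latZ (f2 t) lat_path_end)) _ => i lt_i.
rewrite /hinge !kron_mirror //; try lia.
have -> : (n - 1 - d2)%N = (d1 + k).-1 by lia.
have -> : (n - 1 - d2.-1)%N = (d1 + k)%N by lia.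
ring.
Qed.

Lemma kron_mod_hinge_path t : (d1.-1 <= t <= d1 + k)%N -> exists z, Q (fun i => kron t i - z * h i).
Proof.
move=> /andP[le_t le_t'].
have R := lat_right_node (t := n - 1 - t) ltac:(lia).
rewrite (_ : (n - 1 - (n - 1 - t))%N = t) in R; last lia.
apply: (lat_mod_coprime (z2 := - f2 (n - 1 - t)) coD
  (lat_left_node C2 d1_gt0 d2_gt0 k_gt0 ext1 a1P le_t')).
by apply: lat_ext R _ => i _; rewrite mulNr opprK.
Qed.

Lemma kron_mod_hinge t : (t < n)%N -> exists z, Q (fun i => kron t i - z * h i).
Proof.
move=> lt_t; have [lt_t1|le_t1] := ltnP t d1.-1.
  case: ext1 => _ _ co1; have [z Qz] := kron_mod_hinge_path (t := d1) ltac:(lia).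
  have Qdet := lat_X1_det_node C1 C2 d1_gt0 d2_gt0 k_gt0 (t := t) ltac:(lia).
  apply: (lat_mod_coprime (z1 := f1 t * z) co1 _
    (lat_left_node C2 d1_gt0 d2_gt0 k_gt0 ext1 a1P (_ : t <= d1 + k)%N)); last lia.
  by apply: lat_ext (latD Qdet (latZ (f1 t) Qz)) _ => i _; ring.
have [le_t2|lt_t2] := leqP t (d1 + k); first by apply: kron_mod_hinge_path; lia.
case: ext2 => _ _ co2; set t' := (n - 1 - t)%N.
have [z Qz] := kron_mod_hinge_path (t := (d1 + k).-1) ltac:(lia).
have Qdet := lat_zmat_swap (lat_X1_det_node C2 C1 d2_gt0 d1_gt0 k_gt0 (t := t') ltac:(lia)).
have R := lat_right_node (t := t') ltac:(lia).
have t'E : (n - 1 - t')%N = t by rewrite /t'; lia.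
apply: (lat_mod_coprime (z1 := f2 t' * z) (z2 := - f2 t') co2).
  apply: lat_ext (latD Qdet (latZ (f2 t') Qz)) _ => i lt_i.
  rewrite !kron_mirror; try lia.
  have -> : (n - 1 - d2)%N = (d1 + k).-1 by lia.
  by rewrite t'E; ring.
by apply: lat_ext R _ => i _; rewrite t'E mulNr opprK.
Qed.

Lemma weight_mod_hinge (c : nat -> int) : exists z, Q (fun i => c i - z * h i).
Proof.
suff sum_mod m : (m <= n)%N -> exists z, Q (fun i => \sum_(t < m) c t * kron i t - z * h i).
  have [z Qz] := sum_mod n (leqnn n); exists z.
  by apply: lat_ext Qz _ => i lt_i; rewrite sum_mul_kron lt_i.
elim: m => [|m IHm] le_m.
  by exists 0; apply: lat_ext (lat0 _ _) _ => i _; rewrite big_ord0 mul0r subr0.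
have [z Qz] := IHm (ltnW le_m); have [z' Qz'] := kron_mod_hinge le_m.
exists (z + c m * z'); apply: lat_ext (latD Qz (latZ (c m) Qz')) _ => i _.
by rewrite big_ord_recr /= (kronC i m); ring.
Qed.

Definition Nk : int := X2 * f1 (d1 + k) + X1 * f2 d2.-1.

Lemma Nk_split s t : (d1.-1 <= s)%N -> (d2.-1 <= t)%N -> (s + t = n - 1)%N ->
  X2 * f1 s + X1 * f2 t = Nk.
Proof.
move=> le_s le_t st; rewrite /Nk !acoef_ge ?subnn; try lia.
have -> : (s - d1.-1)%:Z = (d1 + k - d1.-1)%:Z - (t - d2.-1)%:Z by lia.
ring.
Qed.

Lemma lat_Nk_hinge : Q (fun i => Nk * h i).
Proof.
have L := lat_left_node C2 d1_gt0 d2_gt0 k_gt0 ext1 a1P (leqnn (d1 + k)).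
have R := lat_right_node (t := d2.-1) ltac:(lia).
rewrite (_ : (n - 1 - d2.-1)%N = (d1 + k)%N) in R; last lia.
by apply: lat_ext (latB (latZ X1 R) (latZ X2 L)) _ => i _; rewrite /Nk; ring.
Qed.

Lemma coprime_Nk : coprimez (X1 * X2) Nk.
Proof.
case: ext1 => _ _ co1; case: ext2 => _ _ co2.
have f1E : f1 (d1 + k) = detC d1 C1 + k%:Z * X1.
  rewrite acoef_ge; last lia.
  have -> : ((d1 + k) - d1.-1)%:Z = k%:Z + 1 by lia.
  by rewrite /Delta; ring.
have f2E : f2 d2.-1 = detC d2 C2 - X2 by rewrite acoef_ge // subnn /Delta; ring.
rewrite coprimezMl; apply/andP; split.
  have -> : Nk = (X2 * k%:Z + f2 d2.-1) * X1 + X2 * detC d1 C1 by rewrite /Nk f1E; ring.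
  rewrite /coprimez gcdzMDl -/(coprimez X1 (X2 * detC d1 C1)) coprimezMr coD.
  by rewrite coprimez_sym.
have -> : Nk = (f1 (d1 + k) - X1) * X2 + X1 * detC d2 C2 by rewrite /Nk f2E; ring.
rewrite /coprimez gcdzMDl -/(coprimez X2 (X1 * detC d2 C2)) coprimezMr coprimez_sym coD.
by rewrite coprimez_sym.
Qed.

Lemma lat_gamma_boxes x y : gamma_defined d1 d2 x y k ->
  Q (fun i => X1 * X2 * gamma_k d1 d2 x y k i - boxes d1 C1 d2 C2 a1 a2 x y * h i).
Proof.
rewrite /gamma_defined /lsg /rsg => le_xy.
have le_x : (ell x <= d1 + k)%N by lia.
have le_y : (ell y <= d2 + k)%N by lia.
have Lx := lat_left_seq C2 d1_gt0 d2_gt0 k_gt0 ext1 a1P le_x.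
have Ry := lat_zmat_swap (lat_left_seq C1 d2_gt0 d1_gt0 k_gt0 ext2 a2P le_y).
have a1E : \sum_(i < size x) nth 0 x i * a1 i.+1 = \sum_(t < n) sq x t.+1 * f1 t.
  rewrite (@sum_nth_ell x f1 n); last lia.
  by apply: eq_bigr => i _; rewrite (is_a_seq_acoef d1_gt0 ext1 a1P).
have a2E : \sum_(i < size y) nth 0 y i * a2 i.+1 = \sum_(t < d2 + d1 + k) sq y t.+1 * f2 t.
  rewrite (@sum_nth_ell y f2 (d2 + d1 + k)); last lia.
  by apply: eq_bigr => i _; rewrite (is_a_seq_acoef d2_gt0 ext2 a2P).
set Sy := \sum_(t < d2 + d1 + k) sq y t.+1 * f2 t in a2E Ry.
apply: lat_ext (latB (latD (latZ X2 Lx) (latZ X1 Ry)) (latZ (X1 * Sy) lat_path_end)) _.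
move=> i lt_i; rewrite /gamma_k /boxes a1E a2E /hinge !kron_mirror; try lia.
have -> : (n - 1 - i).+1 = (d1 + d2 + k - i)%N by lia.
have -> : (n - 1 - d2)%N = (d1 + k).-1 by lia.
have -> : (n - 1 - d2.-1)%N = (d1 + k)%N by lia.
ring.
Qed.

Lemma gamma_in_Q_of_boxes0 x y : gamma_defined d1 d2 x y k ->
  boxes d1 C1 d2 C2 a1 a2 x y = 0 -> gamma_in_Q d1 C1 d2 C2 x y k.
Proof.
move=> def b0; have [z Qz] := weight_mod_hinge (gamma_k d1 d2 x y k).
have Qzh : Q (fun i => z * h i).
  apply: (lat_coprime coprime_Nk); last first.
    by apply: lat_ext (latZ z lat_Nk_hinge) _ => i _; ring.
  have := lat_gamma_boxes def; rewrite b0 => Qg.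
  by apply: lat_ext (latB Qg (latZ (X1 * X2) Qz)) _ => i _; ring.
by apply: lat_ext (latD Qz Qzh) _ => i _; rewrite subrK.
Qed.

Definition Nk_coord t : int := if (t < d1 + k)%N then X2 * f1 t else - (X1 * f2 (n - 1 - t)).

Lemma dvdz_Nk_coord c : Q c -> (Nk %| \sum_(t < n) Nk_coord t * c t)%Z.
Proof.
move=> [v Dc].
rewrite (eq_bigr (fun t : 'I_n => \sum_(u < n) Nk_coord t * zmat d1 C1 d2 C2 k t u * v u))
  => [|t _]; last by rewrite Dc // mulr_sumr; apply: eq_bigr => u _; rewrite mulrA.
rewrite exchange_big /= rpred_sum // => u _; rewrite -mulr_suml dvdz_mulr //.
have [lt_u|le_u] := ltnP u (d1 + k).
  apply: (dvdz_zmat_col C2 d1_gt0 d2_gt0 k_gt0 (c := X2)) => // t le_t.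
  rewrite /Nk_coord; case: ltnP => [lt_t|ge_t]; first by rewrite subrr dvdz0.
  have -> : - (X1 * f2 (n - 1 - t)) - X2 * f1 t = - Nk.
    by rewrite -(@Nk_split t (n - 1 - t)); try lia; ring.
  by rewrite rpredN dvdzz.
set u' := (n - 1 - u)%N.
rewrite (sum_ord_mirror n (fun t => Nk_coord t * zmat d1 C1 d2 C2 k t u)).
have -> : \sum_(t < n) Nk_coord (n - 1 - t) * zmat d1 C1 d2 C2 k (n - 1 - t) u =
    - \sum_(t < d2 + d1 + k) - Nk_coord (n - 1 - t) * zmat d2 C2 d1 C1 k t u'.
  rewrite -sumrN (addnC d2 d1); apply: eq_bigr => t _.
  have lt_t := ltn_ord t; have lt_u := ltn_ord u.
  rewrite -(zmat_swap C1 C2 (t := n - 1 - t) (u := u)); try lia.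
  by rewrite (_ : (n - 1 - (n - 1 - t))%N = t); [ring | lia].
rewrite rpredN; apply: (dvdz_zmat_col C1 d2_gt0 d1_gt0 k_gt0 (c := X1)
  (g := fun t => - Nk_coord (n - 1 - t)) (u := u')) => [t le_t|]; last lia.
rewrite /Nk_coord; case: ltnP => [lt_t|ge_t].
  have -> : - (X2 * f1 (n - 1 - t)) - X1 * f2 t = - Nk.
    by rewrite -(@Nk_split (n - 1 - t) t); try lia; ring.
  by rewrite rpredN dvdzz.
by rewrite (_ : (n - 1 - (n - 1 - t))%N = t) ?opprK ?subrr ?dvdz0 //; lia.
Qed.

Lemma dvdz_boxes_of_gamma_in_Q x y : gamma_defined d1 d2 x y k ->
  gamma_in_Q d1 C1 d2 C2 x y k -> (Nk %| boxes d1 C1 d2 C2 a1 a2 x y)%Z.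
Proof.
move=> def Qg; set b := boxes d1 C1 d2 C2 a1 a2 x y.
have Qbh : Q (fun i => b * h i).
  by apply: lat_ext (latB (latZ (X1 * X2) Qg) (lat_gamma_boxes def)) _ => i _; ring.
have := dvdz_Nk_coord Qbh.
have -> : \sum_(t < n) Nk_coord t * (b * h t) = b * (X1 * X2).
  rewrite (eq_bigr (fun t : 'I_n => Nk_coord t * (b * kron d1 t) - Nk_coord t * (b * kron d1.-1 t)))
    => [|t _]; last by rewrite /hinge; ring.
  rewrite sumrB !sum_mul_kronZ !ifT; try lia.
  rewrite /Nk_coord !ifT; try lia.
  by rewrite acoef_d // acoef_ge // subnn /Delta; ring.
by rewrite Gauss_dvdzl // coprimez_sym coprime_Nk.
Qed.

End TwoSides.

Lemma Nk_affine d1 d2 k C1 C2 : (0 < d1)%N ->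
  Nk d1 d2 k C1 C2 = Nk d1 d2 0 C1 C2 + k%:Z * (Delta d1 C1 * Delta d2 C2).
Proof. by move=> d1_gt0; rewrite /Nk !(acoef_ge (d := d1)); lia. Qed.

Lemma boxes_eq0_of_gamma_in_Q_often d1 d2 C1 C2 a1 a2 x y :
  (0 < d1)%N -> (0 < d2)%N -> extensible d1 C1 -> extensible d2 C2 ->
  coprimez (Delta d1 C1) (Delta d2 C2) -> is_a_seq d1 C1 a1 -> is_a_seq d2 C2 a2 ->
  (forall N : nat, exists k : nat,
     [/\ (N <= k)%N, gamma_defined d1 d2 x y k & gamma_in_Q d1 C1 d2 C2 x y k]) ->
  boxes d1 C1 d2 C2 a1 a2 x y = 0.
Proof.
move=> d1_gt0 d2_gt0 ext1 ext2 coD a1P a2P Q_often.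
have X12_neq0 : Delta d1 C1 * Delta d2 C2 != 0.
  by case: ext1 => _ X1_neq0 _; case: ext2 => _ X2_neq0 _; rewrite mulf_neq0.
apply: (eq0_of_dvdz_affine (D := Nk d1 d2 0 C1 C2) X12_neq0) => N.
have [k [le_k def Qk]] := Q_often N.+1; exists k => //; first lia.
by rewrite -Nk_affine //; apply: dvdz_boxes_of_gamma_in_Q => //; lia.
Qed.

Theorem corollary4p4 (d1 d2 : nat) (C1 C2 : nat -> nat -> int)
  (a1 a2 : nat -> int) (x y : seq int) :
  marked_diagram d1 C1 -> marked_diagram d2 C2 ->
  extensible_pair d1 C1 d2 C2 ->
  is_a_seq d1 C1 a1 -> is_a_seq d2 C2 a2 ->
  (boxes d1 C1 d2 C2 a1 a2 x y = 0 <->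
   exists N : nat, forall k : nat, (N <= k)%N -> gamma_defined d1 d2 x y k ->
     gamma_in_Q d1 C1 d2 C2 x y k) /\
  (boxes d1 C1 d2 C2 a1 a2 x y = 0 <->
   forall N : nat, exists k : nat, [/\ (N <= k)%N, gamma_defined d1 d2 x y k &
     gamma_in_Q d1 C1 d2 C2 x y k]).
Proof.
move=> [d1_gt0 _ _] [d2_gt0 _ _] [ext1 ext2 coD] a1P a2P.
have i_ii : boxes d1 C1 d2 C2 a1 a2 x y = 0 -> exists N : nat, forall k : nat, (N <= k)%N ->
    gamma_defined d1 d2 x y k -> gamma_in_Q d1 C1 d2 C2 x y k.
  move=> b0; exists 1%N => k k_gt0 def.
  exact: (gamma_in_Q_of_boxes0 d1_gt0 d2_gt0 k_gt0 ext1 ext2 coD a1P a2P def).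
have ii_iii : (exists N : nat, forall k : nat, (N <= k)%N ->
    gamma_defined d1 d2 x y k -> gamma_in_Q d1 C1 d2 C2 x y k) ->
    forall N : nat, exists k : nat,
      [/\ (N <= k)%N, gamma_defined d1 d2 x y k & gamma_in_Q d1 C1 d2 C2 x y k].
  move=> [N0 Q_large] N; exists (N0 + N + lsg d1 x + rsg d2 y)%N.
  have def : gamma_defined d1 d2 x y (N0 + N + lsg d1 x + rsg d2 y).
    by rewrite /gamma_defined; lia.
  by split=> //; [lia | apply: Q_large; first lia].
have iii_i := boxes_eq0_of_gamma_in_Q_often d1_gt0 d2_gt0 ext1 ext2 coD a1P a2P.
split; split; [exact: i_ii | by move/ii_iii/iii_i | by move/i_ii/ii_iii | exact: iii_i].
Qed.
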